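(* Let $N=3$ and let $\mathcal A$ be the algebra generated by $L_{ij}$ ($1\le i,j\le3$) subject to $\hat RL_2L_1=L_2L_1\hat R$ with $\hat R$ the braid matrix of type $\hat o(3)$. Then in $\mathcal A$ the six elements $$L_{11}L_{33}+q^{-1/2}L_{21}L_{23}+q^{-1}L_{31}L_{13},\quad q^{1/2}L_{12}L_{32}+L_{22}L_{22}+q^{-1/2}L_{32}L_{12},\quad qL_{13}L_{31}+q^{1/2}L_{23}L_{21}+L_{33}L_{11},$$ $$L_{11}L_{33}+q^{-1/2}L_{12}L_{32}+q^{-1}L_{13}L_{31},\quad q^{1/2}L_{21}L_{23}+L_{22}L_{22}+q^{-1/2}L_{23}L_{21},\quad qL_{31}L_{13}+q^{1/2}L_{32}L_{12}+L_{33}L_{11}$$ are all equal, and their common value $C$ is central in $\mathcal A$ (i.e. $CL_{ij}=L_{ij}C$ for all $i,j$).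
   Context: Fix nonzero complex $q$ with square root $q^{1/2}$. $(ij)$ denotes the $3\times3$ matrix unit, $i'=4-i$, $\rho=(\tfrac12,0,-\tfrac12)$, $P'_0=\sum_{i,j=1}^3q^{\rho_{i'}-\rho_j}(ij)\otimes(i'j')$, and $\hat R=I_9-e^{-\eta}P'_0$ with $e^{\eta}+e^{-\eta}=q+1+q^{-1}$. $L_1=\sum_{i,j}L_{ij}(ij)\otimes I_3$, $L_2=\sum_{k,l}L_{kl}I_3\otimes(kl)$, so $L_2L_1=\sum L_{kl}L_{ij}(ij)\otimes(kl)$. *)

From HB Require Import structures.
From mathcomp Require Import all_boot all_order all_algebra.
Set Implicit Arguments. Unset Strict Implicit. Unset Printing Implicit Defensive.
Import Order.TTheory GRing.Theory Num.Theory.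
Local Open Scope ring_scope.

(* Indices 1..3 of the paper are represented by 'I_3 = {0,1,2} (shift by one).
   The involution i' = 4 - i becomes rev_ord i (i |-> 2 - i). *)

Definition Lm (A : Type) (L : 'I_3 -> 'I_3 -> A) (i j : nat) : A :=
  L (inord i.-1) (inord j.-1).

(* Entries of hat R = I_9 - t P'_0, where t = e^{-eta}, s = q^{1/2},
   indexed as R[(a,b),(c,d)] (row index (a,b) <-> e_a (x) e_b).
   P'_0 = sum_{i,j} q^{rho_{i'} - rho_j} (ij) (x) (i'j'), and with 0-based
   indices 2(rho_{i'} - rho_j) = i + j - 2, so q^{rho_{i'}-rho_j} = s^(i+j-2). *)
Definition Rhat (K : fieldType) (s t : K) (a b c d : 'I_3) : K :=
  ((a == c) && (b == d))%:R
  - t * (if (b == rev_ord a) && (d == rev_ord c)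
         then s ^ ((a : int) + (c : int) - 2) else 0).

(* Entries of L_2 L_1 = sum L_{kl} L_{ij} (ij) (x) (kl):
   (L_2 L_1)[(a,b),(c,d)] = L_{bd} L_{ac}. *)
Definition L2L1 (A : ringType) (L : 'I_3 -> 'I_3 -> A) (a b c d : 'I_3) : A :=
  L b d * L a c.

Definition RLL_relation (K : fieldType) (A : algType K) (s t : K)
    (L : 'I_3 -> 'I_3 -> A) : Prop :=
  forall a b c d : 'I_3,
    \sum_(e < 3) \sum_(f < 3) Rhat s t a b e f *: L2L1 L e f c d
    = \sum_(e < 3) \sum_(f < 3) Rhat s t e f c d *: L2L1 L a b e f.

From HB Require Import structures.
From mathcomp Require Import all_boot all_order all_algebra zify.
Set Implicit Arguments. Unset Strict Implicit. Unset Printing Implicit Defensive.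
Import Order.TTheory GRing.Theory Num.Theory.
Local Open Scope ring_scope.

(* Since t != 0, the relation hat R L_2 L_1 = L_2 L_1 hat R is equivalent to
   P'_0 L_2 L_1 = L_2 L_1 P'_0; in particular the value of eta plays no role.
   Contracting P'_0 against L_2 L_1 on the left and on the right produces the
   entries of L^T g L and L g L^T for the q-orthogonal form g, and the
   commutation says that both matrices are supported on the antidiagonal
   d = c', with entries s^c times one and the same element C.  The six
   expressions of the statement are rescaled antidiagonal entries, and C is
   central because the double sum
     sum_{e,f} s^(e+f) L_{i e'} L_{f' e} L_{f j}
   equals s^2 L_{ij} C when summed over f first and s^2 C L_{ij} when summed
   over e first. *)

Section Contraction.
Variables (K : fieldType) (V : lmodType K).

Lemma sum_delta_scale (I : finType) (j : I) (F : I -> V) :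
  \sum_i (i == j)%:R *: F i = F j.
Proof.
rewrite (bigD1 j) //= eqxx scale1r big1 ?addr0 //.
by move=> i /negbTE ->; rewrite scale0r.
Qed.

Variables (s t : K) (X : 'I_3 -> 'I_3 -> V).

Lemma Rhat_contract_left a b :
  \sum_e \sum_f Rhat s t a b e f *: X e f
  = X a b - t *: ((b == rev_ord a)%:R
      *: \sum_(e < 3) s ^ ((a : int) + (e : int) - 2) *: X e (rev_ord e)).
Proof.
rewrite /Rhat.
under eq_bigr do under eq_bigr do rewrite scalerBl -scalerA.
under eq_bigr do rewrite sumrB -scaler_sumr.
rewrite sumrB -scaler_sumr; congr (_ - t *: _).
  under eq_bigr do under eq_bigr do
    rewrite -mulnb natrM -scalerA [b == _]eq_sym [a == _]eq_sym.
  by under eq_bigr do rewrite -scaler_sumr sum_delta_scale; rewrite sum_delta_scale.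
rewrite scaler_sumr; apply: eq_bigr => e _.
case: (b == rev_ord a); rewrite ?scale1r ?scale0r; last first.
  by rewrite big1 // => f _; rewrite scale0r.
under eq_bigr do rewrite (fun_if (fun k => k *: _)) scale0r.
by rewrite -big_mkcond big_pred1_eq.
Qed.

Lemma Rhat_contract_right c d :
  \sum_e \sum_f Rhat s t e f c d *: X e f
  = X c d - t *: ((d == rev_ord c)%:R
      *: \sum_(e < 3) s ^ ((e : int) + (c : int) - 2) *: X e (rev_ord e)).
Proof.
rewrite /Rhat.
under eq_bigr do under eq_bigr do rewrite scalerBl -scalerA.
under eq_bigr do rewrite sumrB -scaler_sumr.
rewrite sumrB -scaler_sumr; congr (_ - t *: _).
  under eq_bigr do under eq_bigr do rewrite -mulnb natrM -scalerA.
  by under eq_bigr do rewrite -scaler_sumr sum_delta_scale; rewrite sum_delta_scale.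
rewrite scaler_sumr; apply: eq_bigr => e _.
case: (d == rev_ord c); rewrite ?scale1r ?scale0r; last first.
  by rewrite big1 // => f _; rewrite andbF scale0r.
under eq_bigr do rewrite andbT (fun_if (fun k => k *: _)) scale0r.
by rewrite -big_mkcond big_pred1_eq.
Qed.
End Contraction.

(* [LtgL s L d c] and [LgLt s L b a] are the entries (L^T g L)_{dc} and
   (L g L^T)_{ba}, where g_{e' e} = s^e in 0-based indices. *)
Definition LtgL (K : fieldType) (A : algType K) (s : K)
    (L : 'I_3 -> 'I_3 -> A) (d c : 'I_3) : A :=
  \sum_(e < 3) s ^+ e *: (L (rev_ord e) d * L e c).

Definition LgLt (K : fieldType) (A : algType K) (s : K)
    (L : 'I_3 -> 'I_3 -> A) (b a : 'I_3) : A :=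
  \sum_(e < 3) s ^+ e *: (L b (rev_ord e) * L a e).

Definition casimir (K : fieldType) (A : algType K) (s : K)
    (L : 'I_3 -> 'I_3 -> A) : A :=
  LtgL s L (rev_ord ord0) ord0.

Lemma expr_rev_ord (R : semiRingType) (x : R) (j : 'I_3) :
  x ^+ rev_ord j * x ^+ j = x ^+ 2.
Proof. by rewrite -exprD; case: j => [[|[|[|]]] ?]. Qed.

Section RLL.
Variables (K : fieldType) (s t : K).
Hypotheses (hs : s != 0) (ht : t != 0).
Variables (A : algType K) (L : 'I_3 -> 'I_3 -> A).
Hypothesis hRLL : RLL_relation s t L.

Lemma expfz_add_sub2 (m n : nat) :
  s ^ ((m : int) + (n : int) - 2) = s ^- 2 * (s ^+ m * s ^+ n).
Proof. by rewrite expfzDr ?expfzDr // mulrC -exprnN. Qed.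

Lemma rll_LtgL_LgLt a b c d :
  (b == rev_ord a)%:R *: (s ^+ a *: LtgL s L d c)
  = (d == rev_ord c)%:R *: (s ^+ c *: LgLt s L b a).
Proof.
have := hRLL a b c d; rewrite Rhat_contract_left Rhat_contract_right /L2L1.
move/addrI/oppr_inj/(scalerI ht).
under eq_bigr do rewrite expfz_add_sub2 -!scalerA.
under [in RHS]eq_bigr do rewrite expfz_add_sub2 [s ^+ _ * _]mulrC -!scalerA.
rewrite -!scaler_sumr !scalerA ![_%:R * s ^- 2]mulrC -!scalerA.
by apply: scalerI; rewrite invr_eq0 expf_neq0.
Qed.

Lemma LgLt_rev0 : LgLt s L (rev_ord ord0) ord0 = casimir s L.
Proof.
have := rll_LtgL_LgLt ord0 (rev_ord ord0) ord0 (rev_ord ord0).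
by rewrite eqxx !scale1r.
Qed.

Lemma LtgL_eq d c : LtgL s L d c = (d == rev_ord c)%:R *: (s ^+ c *: casimir s L).
Proof.
have := rll_LtgL_LgLt ord0 (rev_ord ord0) c d; rewrite eqxx !scale1r LgLt_rev0.
by case: eqVneq => _ ->; rewrite ?scale0r ?scale1r.
Qed.

Lemma LgLt_eq b a : LgLt s L b a = (b == rev_ord a)%:R *: (s ^+ a *: casimir s L).
Proof.
have := rll_LtgL_LgLt a b ord0 (rev_ord ord0); rewrite eqxx !scale1r.
by case: eqVneq => _; rewrite ?scale0r ?scale1r.
Qed.

Lemma casimir_LtgL d c :
  (d + c = 2)%N -> (c < 3)%N -> casimir s L = s ^- c *: LtgL s L (inord d) (inord c).
Proof.
move=> hdc hc; have -> : inord d = rev_ord (inord c) :> 'I_3.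
  by apply: val_inj; rewrite /= !inordK; lia.
by rewrite LtgL_eq eqxx scale1r inordK // scalerA mulVf ?expf_neq0 ?scale1r.
Qed.

Lemma casimir_LgLt b a :
  (b + a = 2)%N -> (a < 3)%N -> casimir s L = s ^- a *: LgLt s L (inord b) (inord a).
Proof.
move=> hba ha; have -> : inord b = rev_ord (inord a) :> 'I_3.
  by apply: val_inj; rewrite /= !inordK; lia.
by rewrite LgLt_eq eqxx scale1r inordK // scalerA mulVf ?expf_neq0 ?scale1r.
Qed.

Lemma casimir_central i j : casimir s L * L i j = L i j * casimir s L.
Proof.
pose E := \sum_(e < 3) \sum_(f < 3)
  (s ^+ e * s ^+ f) *: (L i (rev_ord e) * L (rev_ord f) e * L f j).
have ER : E = s ^+ 2 *: (L i j * casimir s L).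
  have -> : E = \sum_(e < 3) s ^+ e *: (L i (rev_ord e) * LtgL s L e j).
    apply: eq_bigr => e _; rewrite /LtgL mulr_sumr scaler_sumr.
    by apply: eq_bigr => f _; rewrite -scalerAr scalerA mulrA.
  under eq_bigr do rewrite LtgL_eq -scalerAr scalerA mulrC -scalerA.
  by rewrite sum_delta_scale rev_ordK -!scalerAr scalerA expr_rev_ord.
have EL : E = s ^+ 2 *: (casimir s L * L i j).
  have -> : E = \sum_(f < 3) s ^+ f *: (LgLt s L i (rev_ord f) * L f j).
    rewrite /E exchange_big; apply: eq_bigr => f _.
    rewrite /LgLt mulr_suml scaler_sumr.
    by apply: eq_bigr => e _; rewrite -scalerAl scalerA mulrC.
  under eq_bigr do
    rewrite LgLt_eq -scalerAl scalerA mulrC -scalerA rev_ordK eq_sym.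
  by rewrite sum_delta_scale -scalerAl scalerA mulrC expr_rev_ord.
by apply: (scalerI (expf_neq0 2 hs)); rewrite -EL -ER.
Qed.
End RLL.

Section Expansion.
Variables (K : fieldType) (A : algType K) (s : K) (L : 'I_3 -> 'I_3 -> A).

Lemma LtgL_expand d c :
  LtgL s L d c = L (inord 2) d * L (inord 0) c + s *: (L (inord 1) d * L (inord 1) c)
                 + s ^+ 2 *: (L (inord 0) d * L (inord 2) c).
Proof.
rewrite /LtgL !big_ord_recl big_ord0 addr0 addrA /= scale1r expr1.
by congr (L _ _ * L _ _ + _ *: (L _ _ * L _ _) + _ *: (L _ _ * L _ _));
  apply: val_inj; rewrite /= ?inordK.
Qed.

Lemma LgLt_expand b a :
  LgLt s L b a = L b (inord 2) * L a (inord 0) + s *: (L b (inord 1) * L a (inord 1))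
                 + s ^+ 2 *: (L b (inord 0) * L a (inord 2)).
Proof.
rewrite /LgLt !big_ord_recl big_ord0 addr0 addrA /= scale1r expr1.
by congr (L _ _ * L _ _ + _ *: (L _ _ * L _ _) + _ *: (L _ _ * L _ _));
  apply: val_inj; rewrite /= ?inordK.
Qed.
End Expansion.

Section ReversedSums.
Variables (K : fieldType) (V : lmodType K) (s : K).
Hypothesis hs : s != 0.
Variables (x y z : V).

Lemma quad_rev : x + s *: y + s ^+ 2 *: z = s ^+ 2 *: z + s *: y + x.
Proof. by rewrite addrC (addrC x) addrA. Qed.

Lemma scale_quad_inv1 :
  s^-1 *: (x + s *: y + s ^+ 2 *: z) = s *: z + y + s^-1 *: x.
Proof.
rewrite quad_rev !scalerDr !scalerA mulVf // scale1r.
by rewrite expr2 mulrA mulVf ?mul1r.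
Qed.

Lemma scale_quad_inv2 :
  s ^- 2 *: (x + s *: y + s ^+ 2 *: z) = z + s^-1 *: y + s ^- 2 *: x.
Proof.
rewrite quad_rev !scalerDr !scalerA mulVf ?expf_neq0 // scale1r.
by rewrite expr2 invfM -mulrA mulVf ?mulr1.
Qed.
End ReversedSums.

Theorem mainTheorem5 (K : numClosedFieldType) (s t : K)
  (hs : s != 0) (ht : t != 0)
  (heta : t + t^-1 = s ^+ 2 + 1 + s ^- 2)
  (A : algType K) (L : 'I_3 -> 'I_3 -> A)
  (hRLL : RLL_relation s t L) :
  let C1 := Lm L 1 1 * Lm L 3 3 + s^-1 *: (Lm L 2 1 * Lm L 2 3)
            + s ^- 2 *: (Lm L 3 1 * Lm L 1 3) in
  let C2 := s *: (Lm L 1 2 * Lm L 3 2) + Lm L 2 2 * Lm L 2 2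
            + s^-1 *: (Lm L 3 2 * Lm L 1 2) in
  let C3 := s ^+ 2 *: (Lm L 1 3 * Lm L 3 1) + s *: (Lm L 2 3 * Lm L 2 1)
            + Lm L 3 3 * Lm L 1 1 in
  let C4 := Lm L 1 1 * Lm L 3 3 + s^-1 *: (Lm L 1 2 * Lm L 3 2)
            + s ^- 2 *: (Lm L 1 3 * Lm L 3 1) in
  let C5 := s *: (Lm L 2 1 * Lm L 2 3) + Lm L 2 2 * Lm L 2 2
            + s^-1 *: (Lm L 2 3 * Lm L 2 1) in
  let C6 := s ^+ 2 *: (Lm L 3 1 * Lm L 1 3) + s *: (Lm L 3 2 * Lm L 1 2)
            + Lm L 3 3 * Lm L 1 1 in
  [/\ C2 = C1, C3 = C1, C4 = C1, C5 = C1 & C6 = C1] /\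
    (forall i j : 'I_3, C1 * L i j = L i j * C1).
Proof.
move=> C1 C2 C3 C4 C5 C6.
have [C1E C2E C3E C4E [C5E C6E]] : [/\ C1 = casimir s L, C2 = casimir s L,
    C3 = casimir s L, C4 = casimir s L & C5 = casimir s L /\ C6 = casimir s L].
  rewrite /C1 /C2 /C3 /C4 /C5 /C6 /Lm /=; split; last split.
  - by rewrite (casimir_LtgL hs ht hRLL (d := 0) (c := 2)) // LtgL_expand scale_quad_inv2.
  - by rewrite (casimir_LtgL hs ht hRLL (d := 1) (c := 1)) // LtgL_expand scale_quad_inv1.
  - by rewrite (casimir_LtgL hs ht hRLL (d := 2) (c := 0)) // invr1 scale1r LtgL_expand quad_rev.
  - by rewrite (casimir_LgLt hs ht hRLL (b := 0) (a := 2)) // LgLt_expand scale_quad_inv2.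
  - by rewrite (casimir_LgLt hs ht hRLL (b := 1) (a := 1)) // LgLt_expand scale_quad_inv1.
  - by rewrite (casimir_LgLt hs ht hRLL (b := 2) (a := 0)) // invr1 scale1r LgLt_expand quad_rev.
rewrite C1E C2E C3E C4E C5E C6E; split=> // i j.
exact: (casimir_central hs ht hRLL i j).
Qed.
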